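(* Let $X$ be a separable infinite-dimensional Banach space over $\mathbb{K}\in\{\mathbb{R},\mathbb{C}\}$ and let $T_1,\dots,T_N\in B(X)$ with $N\ge 2$. Suppose there exist a strictly increasing sequence $(n_k)$ of positive integers, a dense subset $X_0$ of $X$, and maps $S_k:\oplus_{i=1}^N X_0\to X$ ($k\in\mathbb{N}$) such that: (i) for each $x\in X_0$ and each $1\le i\le N$, $T_i^{n_k}x\to 0$ as $k\to\infty$; (ii) for each $\epsilon>0$, each $K\in\mathbb{N}$ and all $x_1,\dots,x_N\in X_0$ there exists $k\ge K$ with (a) $\|S_k(x_1,\dots,x_N)\|<\epsilon$ and (b) $\|T_i^{n_k}S_k(x_1,\dots,x_N)-x_i\|<\epsilon$ for all $1\le i\le N$. Then $T_1,\dots,T_N$ satisfy the Strong Disjoint Blow-up/Collapse Property, and hence $T_1,\dots,T_N$ possess a dense d-hypercyclic manifold.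
   Context: $B(X)$ is the algebra of bounded linear operators on $X$. Operators $T_1,\dots,T_N$ satisfy the Strong Disjoint Blow-up/Collapse Property if for every $L\in\mathbb{N}$ and all non-empty open sets $W,U_{1-L},\dots,U_0,U_1,\dots,U_N$ of $X$ with $0\in W$ there is $n\in\mathbb{N}$ with $W\cap T_1^{-n}(U_1)\cap\cdots\cap T_N^{-n}(U_N)\ne\emptyset$ and $U_\ell\cap T_1^{-n}(W)\cap\cdots\cap T_N^{-n}(W)\neq\emptyset$ for all $1-L\le \ell\le 0$. A vector $x\in X$ is d-hypercyclic for $T_1,\dots,T_N$ if $\{(T_1^nx,\dots,T_N^nx):n\ge0\}$ is dense in $\oplus_{i=1}^N X$ (product topology). A dense d-hypercyclic manifold is a dense linear subspace of $X$ every nonzero vector of which is d-hypercyclic for $T_1,\dots,T_N$. *)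

From HB Require Import structures.
From mathcomp Require Import all_boot all_order all_algebra.
From mathcomp Require Import all_classical all_reals all_analysis.
From mathcomp Require Import complex.
Set Implicit Arguments. Unset Strict Implicit. Unset Printing Implicit Defensive.
Import Order.TTheory GRing.Theory Num.Theory.
Import numFieldNormedType.Exports.
Local Open Scope classical_set_scope.
Local Open Scope ring_scope.

Section Defs.
Variables (K : numFieldType) (X : normedModType K).

Definition separable_space : Prop :=
  exists D : set X, countable D /\ dense D.

Definition finite_dimensional : Prop :=
  exists s : seq X, forall x : X,
    exists c : 'I_(size s) -> K, x = \sum_(j < size s) c j *: s`_j.

Definition infinite_dimensional : Prop := ~ finite_dimensional.

Definition bounded_operator (T : X -> X) : Prop :=
  linear T /\ exists M : K, forall x : X, `|T x| <= M * `|x|.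

Definition opow (T : X -> X) (n : nat) : X -> X := iter n T.

(* Strong Disjoint Blow-up/Collapse Property for T_1..T_N (indexed by 'I_N);
   the sets U_{1-L},...,U_0 are indexed by 'I_L. *)
Definition strong_disjoint_blowup_collapse (N : nat) (T : 'I_N -> X -> X) : Prop :=
  forall (L : nat), (0 < L)%N ->
  forall (W : set X) (V : 'I_L -> set X) (U : 'I_N -> set X),
    open W -> W !=set0 -> W 0 ->
    (forall l, open (V l) /\ V l !=set0) ->
    (forall i, open (U i) /\ U i !=set0) ->
    exists n : nat, (0 < n)%N /\
      (exists x, W x /\ forall i, U i (opow (T i) n x)) /\
      (forall l, exists y, V l y /\ forall i, W (opow (T i) n y)).

Definition d_hypercyclic (N : nat) (T : 'I_N -> X -> X) (x : X) : Prop :=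
  dense (range (fun n : nat => (fun i : 'I_N => opow (T i) n x))
          : set {ptws 'I_N -> X}).

Definition linear_subspace (M : set X) : Prop :=
  M 0 /\ (forall x y, M x -> M y -> M (x + y)) /\
  (forall (a : K) x, M x -> M (a *: x)).

Definition dense_d_hypercyclic_manifold (N : nat) (T : 'I_N -> X -> X)
    (M : set X) : Prop :=
  linear_subspace M /\ dense M /\
  (forall x, M x -> x != 0 -> d_hypercyclic T x).

End Defs.

Definition theorem2p2_over (K : numFieldType) : Prop :=
  forall (X : completeNormedModType K),
  separable_space X -> infinite_dimensional X ->
  forall (N : nat) (T : 'I_N -> X -> X),
  (2 <= N)%N ->
  (forall i, bounded_operator (T i)) ->
  forall (nk : nat -> nat) (X0 : set X) (S : nat -> ('I_N -> X) -> X),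
  (forall k, (0 < nk k)%N) ->
  (forall k, (nk k < nk k.+1)%N) ->
  dense X0 ->
  (forall x, X0 x -> forall i : 'I_N,
      (fun k => opow (T i) (nk k) x) @ \oo --> (0 : X)) ->
  (forall (eps : K), 0 < eps -> forall K0 : nat,
     forall xs : 'I_N -> X, (forall i, X0 (xs i)) ->
     exists k : nat, (K0 <= k)%N /\
       `|S k xs| < eps /\
       (forall i : 'I_N, `|opow (T i) (nk k) (S k xs) - xs i| < eps)) ->
  strong_disjoint_blowup_collapse T /\
  exists M : set X, dense_d_hypercyclic_manifold T M.

From HB Require Import structures.
From mathcomp Require Import all_boot all_order all_algebra.
From mathcomp Require Import all_classical all_reals all_analysis.
From mathcomp Require Import complex.
From mathcomp Require Import ring.
Set Implicit Arguments. Unset Strict Implicit. Unset Printing Implicit Defensive.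
Import Order.TTheory GRing.Theory Num.Theory.
Import numFieldNormedType.Exports.
Local Open Scope classical_set_scope.
Local Open Scope ring_scope.

(* The Blow-up/Collapse property is read off (i) and (ii) directly: shrink the
   open sets U_i to balls around points of X0, apply (ii) to their centres with
   a radius below all the balls, and take k so large that, by (i), the maps
   T_i^{n_k} also send chosen points of the V_l into W.

   The manifold is the span of vectors u_0, u_1, ... obtained as limits of
   countably many small corrections. Step j encodes a triple (q, t, r): vector
   q is corrected by a point of X0 close to S_k(y_t), where y_t runs through a
   countable dense set of N-tuples and k is so large that every T_i^{n_k}
   nearly kills the current vectors 0..q; then T_i^{n_k} sends vectors
   0..q-1 within 1/(r+1) of 0 and vector q within 1/(r+1) of y_t. Each later
   correction is small against the norms of all the T_i^{n_k} used before, so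
   these approximations survive in the limit. For x = sum_(m<=q) a_m u_m with
   a_q != 0, aiming at y_t close to w / a_q puts (T_i^{n_k} x)_i close to w.
   The u_m are dense because u_m starts at a point of a dense sequence and
   moves by less than a radius prescribed by m. *)

Definition unpair (n : nat) : nat * nat := odflt (0, 0)%N (unpickle n).

Lemma unpairK : cancel pickle unpair.
Proof. by move=> x; rewrite /unpair pickleK. Qed.

Definition untriple (n : nat) : nat * nat * nat := odflt (0, 0, 0)%N (unpickle n).

Lemma untripleK : cancel pickle untriple.
Proof. by move=> x; rewrite /untriple pickleK. Qed.

Definition inv_succ (K : numFieldType) (n : nat) : K := n.+1%:R^-1.

Lemma inv_succ_gt0 (K : numFieldType) n : 0 < inv_succ K n.
Proof. by rewrite invr_gt0 ltr0Sn. Qed.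

Lemma inv_succ_le1 (K : numFieldType) n : inv_succ K n <= 1.
Proof. by rewrite invf_le1 ?ltr0Sn // ler1n. Qed.

Lemma finite_lower_bound (K : numFieldType) (I : finType) (a : I -> K) :
  (forall i, 0 < a i) -> exists2 c : K, 0 < c & forall i, c <= a i.
Proof.
move=> a_gt0; have inv_ge0 i : 0 <= (a i)^-1 by rewrite invr_ge0 ltW.
have s_ge0 : 0 <= \sum_i (a i)^-1 by apply: sumr_ge0.
exists (1 + \sum_i (a i)^-1)^-1; first by rewrite invr_gt0 ltr_pwDl.
move=> i; rewrite -[a i]invrK lef_pV2 ?posrE ?invr_gt0 ?ltr_pwDl //.
by rewrite (bigD1 i) //= addrCA lerDl addr_ge0 // sumr_ge0.
Qed.

Section Archimedean.
Variables (K : numFieldType) (K_archi : Num.archimedean_axiom K).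

Lemma archi_inv_succ_lt (eps : K) : 0 < eps -> exists n, inv_succ K n < eps.
Proof.
move=> eps_gt0; have [n n_gt] := K_archi eps^-1; exists n.
rewrite -[eps]invrK ltf_pV2 ?posrE ?invr_gt0 ?ltr0Sn //.
have epsV_gt0 : 0 < eps^-1 by rewrite invr_gt0.
by rewrite -(gtr0_norm epsV_gt0) (lt_trans n_gt) // ltr_nat.
Qed.

Lemma archi_inv_exp2_lt (eps : K) : 0 < eps -> exists j : nat, (2 ^+ j)^-1 < eps.
Proof.
move=> /archi_inv_succ_lt[n n_lt]; exists n; apply: le_lt_trans n_lt.
by rewrite lef_pV2 ?posrE ?exprn_gt0 ?ltr0n // -natrX ler_nat ltn_expl.
Qed.

End Archimedean.

Lemma realType_archimedean (R : realType) : Num.archimedean_axiom R.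
Proof.
by move=> x; exists (Num.truncn `|x|).+1; exact: archimedean.Num.Theory.truncnS_gt.
Qed.

Lemma complex_archimedean (R : realType) : Num.archimedean_axiom R[i].
Proof.
move=> x; have [n n_gt] :=
  realType_archimedean (Num.sqrt (complex.Re x ^+ 2 + complex.Im x ^+ 2)).
exists n; rewrite normc_def -(rmorph_nat (real_complex R)) ltcR.
by rewrite (le_lt_trans (ler_norm _)).
Qed.

Section Operators.
Variables (K : numFieldType) (X : normedModType K).

Definition linear_pack (f : X -> X) (f_lin : linear f) : {linear X -> X} :=
  HB.pack f (GRing.isLinear.Build K X X *:%R f f_lin).

Lemma opow_linear (T : X -> X) n : linear T -> linear (opow T n).
Proof.
move=> T_lin; elim: n => [//|n IHn] a x y.
by rewrite /opow /= -/(opow T n) IHn T_lin.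
Qed.

Lemma opow_bounded (T : X -> X) (B : K) : 0 <= B -> (forall x, `|T x| <= B * `|x|) ->
  forall n x, `|opow T n x| <= B ^+ n * `|x|.
Proof.
move=> B_ge0 T_le; elim=> [|n IHn] x; first by rewrite expr0 mul1r.
have -> : opow T n.+1 x = T (opow T n x) by [].
by rewrite (le_trans (T_le _)) // exprS -mulrA ler_wpM2l.
Qed.

Lemma common_operator_bound (I : finType) (T : I -> X -> X) :
  (forall i, exists C : K, forall x, `|T i x| <= C * `|x|) ->
  exists2 B : K, 1 <= B & forall i x, `|T i x| <= B * `|x|.
Proof.
move=> /boolp.choice[C C_le]; exists (1 + \sum_i `|C i|).
  by rewrite lerDl sumr_ge0.
move=> i x; have Cx_ge0 : 0 <= C i * `|x| := le_trans (normr_ge0 _) (C_le i x).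
rewrite (le_trans (C_le i x)) // -(ger0_norm Cx_ge0) normrM normr_id ler_wpM2r //.
by rewrite (bigD1 i) //= addrCA lerDl addr_ge0 // sumr_ge0.
Qed.

Lemma open_norm_ball (O : set X) z : open O -> O z ->
  exists2 r : K, 0 < r & forall y, `|z - y| < r -> O y.
Proof.
rewrite openE => /[apply] /nbhs_ballP[r r_gt0 ball_sub].
by exists r => // y zy; apply: ball_sub; rewrite -ball_normE.
Qed.

Lemma dense_approx (D : set X) z (r : K) : dense D -> 0 < r ->
  exists2 x, D x & `|z - x| < r.
Proof.
move=> D_dense r_gt0; have zz : ball z r z by exact: ballxx.
have [x [zx Dx]] := D_dense (ball z r) (ex_intro _ z zz) (ball_open z r).
by exists x; rewrite -?ball_normE in zx.
Qed.

End Operators.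

Lemma linear_bound_continuous (K : numFieldType) (V W : normedModType K)
    (f : {linear V -> W}) (C : K) :
  0 <= C -> (forall x, `|f x| <= C * `|x|) -> continuous f.
Proof.
move=> C_ge0 f_le; apply: bounded_linear_continuous.
exists C; split; first exact: ger0_real.
move=> B C_lt_B; apply/nbhs_ballP; exists 1 => //= x.
rewrite -ball_normE /= sub0r normrN => x_lt1.
rewrite (le_trans (f_le x)) // (le_trans (ler_wpM2l C_ge0 (ltW x_lt1))) //.
by rewrite mulr1 ltW.
Qed.

Section Telescoping.
Variables (K : numFieldType) (V : normedModType K).
Implicit Types (w : nat -> V) (c : K).

Lemma telescope_exp2_le w c j0 : 0 <= c ->
  (forall J, (j0 <= J)%N -> `|w J.+1 - w J| <= c / 2 ^+ J.+1) ->
  forall J, (j0 <= J)%N -> `|w J - w j0| <= c / 2 ^+ j0.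
Proof.
move=> c_ge0 w_le; have exp2_neq0 n : (2 : K) ^+ n != 0 by rewrite expf_neq0 ?pnatr_eq0.
have partial d : `|w (j0 + d)%N - w j0| <= c / 2 ^+ j0 - c / 2 ^+ (j0 + d).
  elim: d => [|d IHd]; first by rewrite addn0 !subrr normr0.
  rewrite addnS; set n := (j0 + d)%N.
  have -> : w n.+1 - w j0 = (w n.+1 - w n) + (w n - w j0) by rewrite addrA subrK.
  apply: (le_trans (ler_normD _ _)).
  apply: (le_trans (lerD (w_le n (leq_addr d j0)) IHd)).
  suff -> : c / 2 ^+ n.+1 + (c / 2 ^+ j0 - c / 2 ^+ n) =
            c / 2 ^+ j0 - c / 2 ^+ n.+1 by [].
  by rewrite exprS; field; rewrite !exp2_neq0.
move=> J /subnKC <-; rewrite (le_trans (partial _)) // gerBl.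
by rewrite divr_ge0 ?exprn_ge0 ?ler0n.
Qed.

Lemma lim_dist_le w (l a : V) (b : K) :
  w @ \oo --> l -> (\forall J \near \oo, `|w J - a| <= b) -> `|l - a| <= b.
Proof.
move=> w_cvg w_le; apply/ler_addgt0Pr => eps eps_gt0.
near \oo => J.
have -> : l - a = (l - w J) + (w J - a) by rewrite addrA subrK.
rewrite [b + eps]addrC (le_trans (ler_normD _ _)) // lerD //.
  by apply: ltW; near: J; exact: (cvgrPdist_lt _ _).1 w_cvg eps eps_gt0.
by near: J.
Unshelve. all: by end_near.
Qed.

End Telescoping.

Lemma telescope_exp2_cvg (K : numFieldType) (V : completeNormedModType K)
    (w : nat -> V) (c : K) : Num.archimedean_axiom K -> 0 <= c ->
  (forall J, `|w J.+1 - w J| <= c / 2 ^+ J.+1) -> cvg (w @ \oo).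
Proof.
move=> K_archi c_ge0 w_le; apply: cauchy_cvg; apply/cauchy_exP => eps eps_gt0.
have c1_gt0 : 0 < c + 1 by rewrite ltr_wpDl.
have [j j_lt] := archi_inv_exp2_lt K_archi (divr_gt0 eps_gt0 c1_gt0).
exists (w j), j => // J /= jJ; rewrite -ball_normE /= distrC.
apply: le_lt_trans (telescope_exp2_le c_ge0 (fun J _ => w_le J) jJ) _.
apply: (@le_lt_trans _ _ ((c + 1) * (2 ^+ j)^-1)).
  by rewrite ler_wpM2r ?invr_ge0 ?exprn_ge0 ?ler0n // lerDl.
by rewrite mulrC -ltr_pdivlMr.
Qed.

Section Criterion.
Variables (K : numFieldType) (X : normedModType K) (N : nat).
Variables (A : 'I_N -> nat -> X -> X) (X0 : set X).

Definition vanishing_on : Prop :=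
  forall x, X0 x -> forall i, (fun k => A i k x) @ \oo --> (0 : X).

Definition small_approx_preimages (S : nat -> ('I_N -> X) -> X) : Prop :=
  forall eps : K, 0 < eps -> forall K0 : nat, forall xs : 'I_N -> X,
  (forall i, X0 (xs i)) -> exists k : nat, (K0 <= k)%N /\
    `|S k xs| < eps /\ (forall i, `|A i k (S k xs) - xs i| < eps).

End Criterion.

Lemma near_vanishing_orbits (K : numFieldType) (X : normedModType K) N
    (A : 'I_N -> nat -> X -> X) (I : finType) (x : I -> X) (r : K) :
  (forall l i, (fun k => A i k (x l)) @ \oo --> (0 : X)) -> 0 < r ->
  exists K0, forall k, (K0 <= k)%N -> forall l i, `|A i k (x l)| < r.
Proof.
move=> x_vanish r_gt0.
have : \forall k \near \oo, forall l i, `|A i k (x l)| < r.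
  apply: filter_forall => l; apply: filter_forall => i.
  exact: (cvgr0Pnorm_lt _).1 (x_vanish l i) r r_gt0.
by move=> [K0 _ K0_le]; exists K0 => k /K0_le.
Qed.

Lemma strong_disjoint_blowup_collapse_criterion (K : numFieldType)
    (X : normedModType K) N (T : 'I_N -> X -> X) (nk : nat -> nat)
    (X0 : set X) (S : nat -> ('I_N -> X) -> X) :
  let A i k := opow (T i) (nk k) in
  (forall k, (0 < nk k)%N) -> dense X0 -> vanishing_on A X0 ->
  small_approx_preimages A X0 S -> strong_disjoint_blowup_collapse T.
Proof.
move=> A nk_gt0 X0_dense A_vanish S_approx L _ W V U W_open _ W0 V_open U_open.
have [r r_gt0 W_ball] := open_norm_ball W_open W0.
have center i : exists c : X * K,
    [/\ X0 c.1, 0 < c.2 & forall y, `|c.1 - y| < c.2 -> U i y].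
  have [x [Ux X0x]] := X0_dense _ (U_open i).2 (U_open i).1.
  by have [ri ri_gt0 U_ball] := open_norm_ball (U_open i).1 Ux; exists (x, ri).
have [c c_spec] := boolp.choice center.
have point l : exists y, V l y /\ X0 y.
  by have [y [Vy X0y]] := X0_dense _ (V_open l).2 (V_open l).1; exists y.
have [y y_spec] := boolp.choice point.
have radius_gt0 (o : option 'I_N) : 0 < if o is Some i then (c i).2 else r.
  by case: o => [i|//]; case: (c_spec i).
have [eps eps_gt0 eps_le] := finite_lower_bound radius_gt0.
have [K1 K1_le] := near_vanishing_orbits
  (fun l i => A_vanish _ (y_spec l).2 i) r_gt0.
set xs := fun i => (c i).1.
have [k [K1k [S_small S_close]]] : exists k, (K1 <= k)%N /\
    `|S k xs| < eps /\ forall i, `|A i k (S k xs) - xs i| < eps.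
  by apply: S_approx => // i; case: (c_spec i).
exists (nk k); split; first exact: nk_gt0.
split.
  exists (S k xs); split.
    by apply: W_ball; rewrite sub0r normrN (lt_le_trans S_small (eps_le None)).
  move=> i; have [_ _ U_ball] := c_spec i; apply: U_ball; rewrite distrC.
  exact: lt_le_trans (S_close i) (eps_le (Some i)).
move=> l; exists (y l); split; first exact: (y_spec l).1.
by move=> i; apply: W_ball; rewrite sub0r normrN; exact: K1_le K1k l i.
Qed.

Lemma d_hypercyclic_of_approx (K : numFieldType) (X : normedModType K) N
    (T : 'I_N -> X -> X) (x : X) : Num.archimedean_axiom K ->
  (forall (w : 'I_N -> X) (eps : K), 0 < eps ->
    exists n, forall i, `|opow (T i) n x - w i| < eps) ->
  d_hypercyclic T x.
Proof.
move=> K_archi x_approx O [f Of] O_open.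
have /boolp.choice[n n_approx] r := x_approx f _ (inv_succ_gt0 K r).
pose g r : {ptws 'I_N -> X} := fun i => opow (T i) (n r) x.
have g_cvg : {ptws, g @ \oo --> f}.
  (* [pointwise_cvgP] asks for a topology on the index type, on which the
     pointwise topology does not depend. *)
  apply/(@pointwise_cvgP (discrete_topology 'I_N)) => i.
  apply/cvgrPdist_lt => eps eps_gt0.
  have [r0 r0_lt] := archi_inv_succ_lt K_archi eps_gt0.
  exists r0 => // r /= r0r; rewrite distrC (lt_trans (n_approx r i)) //.
  by rewrite (le_lt_trans _ r0_lt) // lef_pV2 ?posrE ?ltr0Sn // ler_nat ltnS.
have [r0 _ Og] := g_cvg O (open_nbhs_nbhs (conj O_open Of)).
by exists (g r0); split; [exact: Og r0 (leqnn r0) | exists (n r0)].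
Qed.

Lemma separable_dense_seq (K : numFieldType) (X : normedModType K) (X0 : set X) :
  Num.archimedean_axiom K -> separable_space X -> dense X0 ->
  exists2 e : nat -> X, (forall a, X0 (e a)) &
    forall z eps, 0 < eps -> exists a, `|z - e a| < eps.
Proof.
move=> K_archi [D [/countable_injP[g g_inj] D_dense]] X0_dense.
pose d a := xget (0 : X) [set x | D x /\ g x = a].
have dK x : D x -> d (g x) = x.
  move=> Dx; have [Dy gy] : [set y | D y /\ g y = g x] (d (g x)).
    by apply: xgetPex; exists x.
  by apply: g_inj; rewrite ?inE.
have near_d n :
    exists x, X0 x /\ `|d (unpair n).1 - x| < inv_succ K (unpair n).2.
  have [x X0x dx] :=
    dense_approx (d (unpair n).1) X0_dense (inv_succ_gt0 K (unpair n).2).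
  by exists x.
have [e e_spec] := boolp.choice near_d.
exists e => [a|z eps eps_gt0]; first by case: (e_spec a).
have eps2_gt0 : 0 < eps / 2 by rewrite divr_gt0.
have [x Dx zx] := dense_approx z D_dense eps2_gt0.
have [b b_lt] := archi_inv_succ_lt K_archi eps2_gt0.
exists (pickle (g x, b)); have [_] := e_spec (pickle (g x, b)).
rewrite unpairK /= dK // => x_close.
rewrite [eps]splitr -(subrK x z) -addrA (le_lt_trans (ler_normD _ _)) // ltrD //.
exact: lt_trans x_close b_lt.
Qed.

Section Span.
Variables (K : numFieldType) (X : normedModType K) (f : nat -> X).

Definition span_seq : set X :=
  [set x | exists p (a : nat -> K), x = \sum_(m < p) a m *: f m].

Lemma span_seq_widen p p' (a : nat -> K) : (p <= p')%N ->
  \sum_(m < p) a m *: f m = \sum_(m < p') (if (m < p)%N then a m else 0) *: f m.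
Proof.
move=> pp'; rewrite (big_ord_widen p' (fun m => a m *: f m) pp') big_mkcond /=.
by apply: eq_bigr => m _; case: ifP; rewrite ?scale0r.
Qed.

Lemma span_seq_subspace : linear_subspace span_seq.
Proof.
split; first by exists 0%N, (fun=> 0); rewrite big_ord0.
split=> [x y [p [a ->]] [p' [a' ->]]|c x [p [a ->]]].
  exists (p + p')%N, (fun m => (if (m < p)%N then a m else 0) +
                              (if (m < p')%N then a' m else 0)).
  rewrite (span_seq_widen _ (leq_addr p' p)) (span_seq_widen _ (leq_addl p p')).
  by rewrite -big_split; apply: eq_bigr => m _; rewrite scalerDl.
exists p, (fun m => c * a m); rewrite scaler_sumr.
by apply: eq_bigr => m _; rewrite scalerA.
Qed.

Lemma span_seq_gen m : span_seq (f m).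
Proof.
exists m.+1, (fun l => if l == m then 1 else 0).
rewrite big_ord_recr /= eqxx scale1r big1 ?add0r // => l _.
by rewrite ltn_eqF // scale0r.
Qed.

Lemma span_seq_lead x : span_seq x -> x != 0 ->
  exists q (a : nat -> K), a q != 0 /\ x = \sum_(m < q.+1) a m *: f m.
Proof.
move=> [p [a ->]]; elim: p => [|p IHp]; first by rewrite big_ord0 eqxx.
rewrite big_ord_recr /=; have [ap0|ap_neq0] := eqVneq (a p) 0.
  by rewrite ap0 scale0r addr0.
by move=> _; exists p, a; rewrite big_ord_recr.
Qed.

End Span.

Section Construction.
Variables (K : numFieldType) (X : completeNormedModType K) (N : nat).
Variables (A : 'I_N -> nat -> {linear X -> X}) (M : nat -> K).
Hypotheses (M_ge1 : forall k, 1 <= M k)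
  (M_homo : {homo M : k l / (k <= l)%N >-> k <= l})
  (A_bounded : forall i k x, `|A i k x| <= M k * `|x|).
Variables (X0 : set X) (S : nat -> ('I_N -> X) -> X) (e : nat -> X).
Hypotheses (A_vanish : vanishing_on (fun i k => A i k) X0)
  (S_approx : small_approx_preimages (fun i k => A i k) X0 S)
  (e_X0 : forall a, X0 (e a))
  (e_dense : forall z eps, 0 < eps -> exists a, `|z - e a| < eps)
  (K_archi : Num.archimedean_axiom K).

Lemma M_gt0 k : 0 < M k. Proof. exact: lt_le_trans ltr01 (M_ge1 k). Qed.

Lemma A_norm_lt i k x (r : K) : `|x| < r / M k -> `|A i k x| < r.
Proof.
move=> x_lt; rewrite (le_lt_trans (A_bounded i k x)) //.
by rewrite mulrC -ltr_pdivlMr ?M_gt0.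
Qed.

Lemma vanishingD i x y :
  (fun k => A i k x) @ \oo --> (0 : X) -> (fun k => A i k y) @ \oo --> (0 : X) ->
  (fun k => A i k (x + y)) @ \oo --> (0 : X).
Proof.
move=> x_vanish y_vanish; under eq_fun do rewrite linearD.
by rewrite -[(0 : X)]addr0; apply: cvgD.
Qed.

Lemma approx_preimage_in_X0 (y : 'I_N -> X) (eps : K) K0 :
  (forall i, X0 (y i)) -> 0 < eps -> exists k p,
    [/\ (K0 <= k)%N, X0 p, `|p| < eps & forall i, `|A i k p - y i| < eps].
Proof.
move=> X0y eps_gt0; have eps2_gt0 : 0 < eps / 2 by rewrite divr_gt0.
have [k [K0k [S_small S_close]]] := S_approx eps2_gt0 K0 X0y.
have [a a_close] := e_dense (S k y) (divr_gt0 eps2_gt0 (M_gt0 k)).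
have a_close' : `|S k y - e a| < eps / 2.
  apply: lt_le_trans a_close _; rewrite ler_pdivrMr ?M_gt0 //.
  by rewrite ler_peMr ?(ltW eps2_gt0).
exists k, (e a); split => //.
  rewrite -[e a](subKr (S k y)) [eps]splitr.
  by rewrite (le_lt_trans (ler_normB _ _)) // ltrD.
move=> i; rewrite -[e a](subKr (S k y)) linearB /= addrAC [eps]splitr.
by rewrite (le_lt_trans (ler_normB _ _)) // ltrD // A_norm_lt.
Qed.

Definition target (t : nat) (i : 'I_N) : X :=
  e (odflt [ffun=> 0%N] (unpickle t : option {ffun 'I_N -> nat}) i).

Lemma target_dense (w : 'I_N -> X) (eps : K) : 0 < eps ->
  exists t, forall i, `|target t i - w i| < eps.
Proof.
move=> eps_gt0; have [a a_close] := boolp.choice (fun i => e_dense (w i) eps_gt0).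
by exists (pickle [ffun i => a i]) => i; rewrite /target pickleK /= ffunE distrC.
Qed.

Definition seed (m : nat) : X := e (unpair m).1.
Definition seed_radius (m : nat) : K := inv_succ K (unpair m).2.

Lemma seed_radius_gt0 m : 0 < seed_radius m. Proof. exact: inv_succ_gt0. Qed.
Lemma seed_radius_le1 m : seed_radius m <= 1. Proof. exact: inv_succ_le1. Qed.

Definition task_index (j : nat) : nat := (untriple j).1.1.
Definition task_target (j : nat) : 'I_N -> X := target (untriple j).1.2.
Definition task_prec (j : nat) : K := inv_succ K (untriple j).2.

(* Step J moves a vector by at most weight J / M k, where k is the time reached
   before step J. So even through any A i k' with k' <= k, the moves of steps
   J, J+1, ... add up to at most task_prec j for every j < J. *)
Definition weight (J : nat) : K := (\prod_(j < J) task_prec j) / 2 ^+ J.+1.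

Lemma task_prec_gt0 j : 0 < task_prec j. Proof. exact: inv_succ_gt0. Qed.

Lemma task_prec_in01 j : 0 <= task_prec j <= 1.
Proof. by rewrite ltW ?task_prec_gt0 ?inv_succ_le1. Qed.

Lemma prod_task_prec_le1 J : \prod_(j < J) task_prec j <= 1.
Proof. exact: prodr_ile1 _ (fun j : 'I_J => fun=> task_prec_in01 j). Qed.

Lemma weight_gt0 J : 0 < weight J.
Proof.
by rewrite divr_gt0 ?exprn_gt0 // prodr_gt0 // => j _; apply: task_prec_gt0.
Qed.

Lemma weight_le_exp2 J : weight J <= (2 ^+ J.+1)^-1.
Proof.
by rewrite -[X in _ <= X]mul1r ler_wpM2r ?invr_ge0 ?exprn_ge0 ?prod_task_prec_le1.
Qed.

Lemma weight_le_task_prec j J : (j < J)%N -> weight J <= task_prec j / 2 ^+ J.+1.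
Proof.
move=> jJ; rewrite ler_wpM2r ?invr_ge0 ?exprn_ge0 // (bigD1 (Ordinal jJ)) //=.
apply: ler_piMr; first exact: ltW (task_prec_gt0 j).
exact: prodr_ile1 _ (fun l : 'I_J => fun=> task_prec_in01 l).
Qed.

Record state := State { vecs : nat -> X; time : nat }.

Definition admissible (s : state) : Prop :=
  forall m i, (fun k => A i k (vecs s m)) @ \oo --> (0 : X).

Definition step_spec (j : nat) (s s' : state) : Prop :=
  let q := task_index j in
  [/\ (time s < time s')%N,
      forall m, m != q -> vecs s' m = vecs s m,
      `|vecs s' q - vecs s q| <= weight j * seed_radius q / M (time s),
      forall i m, (m < q)%N -> `|A i (time s') (vecs s' m)| < task_prec j &
      forall i, `|A i (time s') (vecs s' q) - task_target j i| < task_prec j].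

Lemma step_exists j s : admissible s -> exists2 s', admissible s' & step_spec j s s'.
Proof.
move=> s_adm; set q := task_index j; set pr := task_prec j.
set rho := weight j * seed_radius q / M (time s).
have pr2_gt0 : 0 < pr / 2 by rewrite divr_gt0 ?task_prec_gt0.
have rho_gt0 : 0 < rho.
  exact: divr_gt0 (mulr_gt0 (weight_gt0 j) (seed_radius_gt0 q)) (M_gt0 _).
have bound_gt0 (b : bool) : 0 < if b then rho else pr / 2 by case: b.
have [dl dl_gt0 dl_le] := finite_lower_bound bound_gt0.
have [K1 K1_le] := near_vanishing_orbits (A := fun i k => A i k)
  (x := fun m : 'I_q.+1 => vecs s m) (fun m i => s_adm m i) pr2_gt0.
have [k [p [k_ge X0p p_small p_close]]] := approx_preimage_in_X0
  (y := task_target j) (maxn K1 (time s).+1) (fun i => e_X0 _) dl_gt0.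
have [K1k sk] : (K1 <= k)%N /\ (time s < k)%N.
  by split; apply: leq_trans k_ge; rewrite ?leq_maxl ?leq_maxr.
exists (State (fun m => if m == q then vecs s q + p else vecs s m) k).
  move=> m i /=; case: ifP => _; last exact: s_adm.
  by apply: vanishingD; [exact: s_adm | exact: A_vanish].
split => //=.
- by move=> m /negbTE ->.
- by rewrite eqxx addrAC subrr add0r (le_trans (ltW p_small) (dl_le true)).
- move=> i m mq; rewrite (ltn_eqF mq).
  apply: lt_trans (K1_le k K1k (Ordinal (ltnW mq : (m < q.+1)%N)) i) _.
  by rewrite ltr_pdivrMr // ltr_pMr ?task_prec_gt0 // ltr1n.
move=> i; rewrite eqxx linearD /= -addrA [task_prec j]splitr.
rewrite (le_lt_trans (ler_normD _ _)) // ltrD //; first exact: (K1_le k K1k ord_max i).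
exact: lt_le_trans (p_close i) (dl_le false).
Qed.

Lemma step_total j s : exists s', admissible s -> admissible s' /\ step_spec j s s'.
Proof.
have [s_adm|s_nadm] := pselect (admissible s); last by exists s => /s_nadm.
by have [s' s'_adm s_s'] := step_exists j s_adm; exists s'.
Qed.

Definition next (j : nat) (s : state) : state := sval (cid (step_total j s)).

Fixpoint run (J : nat) : state :=
  if J is J'.+1 then next J' (run J') else State seed 0.

Lemma run_admissible J : admissible (run J).
Proof.
elim: J => [m i|J IHJ]; first exact: (A_vanish (e_X0 (unpair m).1) i).
exact: (svalP (cid (step_total J (run J))) IHJ).1.
Qed.

Lemma run_step J : step_spec J (run J) (run J.+1).
Proof. exact: (svalP (cid (step_total J (run J))) (run_admissible J)).2. Qed.

Lemma time_run_lt J : (time (run J) < time (run J.+1))%N.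
Proof. by case: (run_step J). Qed.

Lemma time_run_homo : {homo (fun J => time (run J)) : J J' / (J <= J')%N}.
Proof.
apply: (@homo_leq _ _ (fun a b => (a <= b)%N) leqnn leq_trans) => J.
exact: ltnW (time_run_lt J).
Qed.

Lemma run_increment J m : `|vecs (run J.+1) m - vecs (run J) m|
  <= weight J * seed_radius m / M (time (run J)).
Proof.
have [_ same moved _ _] := run_step J.
have [->|mJ] := eqVneq m (task_index J); first exact: moved.
rewrite same // subrr normr0 ltW //.
exact: divr_gt0 (mulr_gt0 (weight_gt0 J) (seed_radius_gt0 m)) (M_gt0 _).
Qed.

Lemma run_increment_exp2 J m :
  `|vecs (run J.+1) m - vecs (run J) m| <= seed_radius m / 2 ^+ J.+1.
Proof.
have r_ge0 := ltW (seed_radius_gt0 m).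
rewrite (le_trans (run_increment J m)) // ler_pdivrMr ?M_gt0 //.
apply: (@le_trans _ _ (seed_radius m / 2 ^+ J.+1)).
  by rewrite mulrC ler_wpM2l ?weight_le_exp2.
by rewrite ler_peMr ?M_ge1 // divr_ge0 ?exprn_ge0.
Qed.

Definition u (m : nat) : X := lim ((fun J => vecs (run J) m) @ \oo).

Lemma u_cvg m : (fun J => vecs (run J) m) @ \oo --> u m.
Proof.
apply: telescope_exp2_cvg K_archi (ltW (seed_radius_gt0 m)) _ => J.
exact: run_increment_exp2.
Qed.

Lemma u_seed_dist m : `|u m - seed m| <= seed_radius m.
Proof.
apply: (lim_dist_le (u_cvg (m := m))); apply: nearW => J.
have := telescope_exp2_le (ltW (seed_radius_gt0 m))
  (fun J _ => run_increment_exp2 J m) (leq0n J).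
by rewrite expr0 divr1.
Qed.

Lemma A_run_increment j J i m : (j < J)%N ->
  `|A i (time (run j.+1)) (vecs (run J.+1) m) - A i (time (run j.+1)) (vecs (run J) m)|
    <= task_prec j / 2 ^+ J.+1.
Proof.
move=> jJ; set k := time (run j.+1); set MJ := M (time (run J)).
have Mk_le : M k <= MJ by apply/M_homo/time_run_homo.
rewrite -linearB (le_trans (A_bounded _ _ _)) //.
apply: (@le_trans _ _ (MJ * (weight J * seed_radius m / MJ))).
  by apply: ler_pM => //; [exact: ltW (M_gt0 k) | exact: run_increment].
rewrite mulrC divfK ?gt_eqF ?M_gt0 // (le_trans _ (weight_le_task_prec jJ)) //.
by apply: ler_piMr; [exact: ltW (weight_gt0 J) | exact: seed_radius_le1].
Qed.

Lemma A_lim_near j i m (z : X) :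
  let k := time (run j.+1) in
  `|A i k (vecs (run j.+1) m) - z| < task_prec j ->
  `|A i k (u m) - z| < task_prec j *+ 2.
Proof.
move=> k close; set w := fun J => A i k (vecs (run J) m).
have w_cvg : w @ \oo --> A i k (u m).
  apply: cvg_comp (u_cvg (m := m)) _.
  exact: linear_bound_continuous (ltW (M_gt0 k)) (A_bounded i k) (u m).
have tail : `|A i k (u m) - w j.+1| <= task_prec j.
  apply: lim_dist_le w_cvg _; exists j.+1 => // J /= jJ.
  rewrite (le_trans (telescope_exp2_le (ltW (task_prec_gt0 j)) _ jJ)) //.
    by move=> J' jJ'; apply: A_run_increment.
  apply: ler_piMr; first exact: ltW (task_prec_gt0 j).
  by rewrite invf_le1 ?exprn_gt0 // exprn_ege1 ?ler1n.
have -> : A i k (u m) - z = (A i k (u m) - w j.+1) + (w j.+1 - z).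
  by rewrite addrA subrK.
by rewrite mulr2n (le_lt_trans (ler_normD _ _)) // ler_ltD.
Qed.

Lemma A_combination_near_target j i (a : nat -> K) :
  `|A i (time (run j.+1)) (\sum_(m < (task_index j).+1) a m *: u m)
      - a (task_index j) *: task_target j i|
    <= (\sum_(m < (task_index j).+1) `|a m|) * task_prec j *+ 2.
Proof.
have [_ _ _ others focus] := run_step j.
rewrite linear_sum !big_ord_recr /= linearZ -addrA -scalerBr mulrDl mulrnDl.
rewrite (le_trans (ler_normD _ _)) // lerD //.
  rewrite (le_trans (ler_norm_sum _ _ _)) // mulr_suml -sumrMnl ler_sum // => m _.
  rewrite linearZ normrZ -mulrnAr ler_wpM2l // ltW // -[A _ _ (u m)]subr0.
  by apply: A_lim_near; rewrite subr0 others.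
by rewrite normrZ -mulrnAr ler_wpM2l // ltW // A_lim_near.
Qed.

Lemma span_lead_universal q (a : nat -> K) : a q != 0 ->
  forall (w : 'I_N -> X) (eps : K), 0 < eps ->
  exists k, forall i, `|A i k (\sum_(m < q.+1) a m *: u m) - w i| < eps.
Proof.
move=> aq_neq0 w eps eps_gt0; have aq_gt0 : 0 < `|a q| by rewrite normr_gt0.
set C := \sum_(m < q.+1) `|a m|.
have C_gt0 : 0 < C by rewrite /C big_ord_recr /= ltr_wpDl ?sumr_ge0.
have eps2_gt0 : 0 < eps / 2 by rewrite divr_gt0.
have [t t_close] :=
  target_dense (fun i => (a q)^-1 *: w i) (divr_gt0 eps2_gt0 aq_gt0).
have [r r_lt] :=
  archi_inv_succ_lt K_archi (divr_gt0 eps2_gt0 (mulr_gt0 C_gt0 (ltr0n K 2))).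
set j := pickle (q, t, r).
have jq : task_index j = q by rewrite /task_index untripleK.
have jt : task_target j = target t by rewrite /task_target untripleK.
have jr : task_prec j = inv_succ K r by rewrite /task_prec untripleK.
exists (time (run j.+1)) => i; have := A_combination_near_target j i a.
rewrite jq jt jr => comb_le.
have -> : A i (time (run j.+1)) (\sum_(m < q.+1) a m *: u m) - w i =
  (A i (time (run j.+1)) (\sum_(m < q.+1) a m *: u m) - a q *: target t i)
  + a q *: (target t i - (a q)^-1 *: w i).
  by rewrite scalerBr scalerA mulfV // scale1r addrA subrK.
rewrite [eps]splitr (le_lt_trans (ler_normD _ _)) // ltrD //.
  rewrite (le_lt_trans comb_le) //.
  have -> : eps / 2 = C * (eps / 2 / (C * 2)) *+ 2.
    by rewrite -mulr_natr; field; rewrite gt_eqF.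
  by rewrite ltr_pMn2r // ltr_pM2l.
by rewrite normrZ -ltr_pdivlMl // mulrC.
Qed.

Lemma span_seq_u_dense : dense (span_seq u).
Proof.
move=> O [z Oz] O_open; have [r r_gt0 O_ball] := open_norm_ball O_open Oz.
have r2_gt0 : 0 < r / 2 by rewrite divr_gt0.
have [a a_close] := e_dense z r2_gt0.
have [b b_lt] := archi_inv_succ_lt K_archi r2_gt0.
set m := pickle (a, b); exists (u m); split; last exact: span_seq_gen.
apply: O_ball; rewrite -(subrK (e a) z) -addrA [r]splitr.
rewrite (le_lt_trans (ler_normD _ _)) // ltrD // distrC.
have := u_seed_dist m; rewrite /seed /seed_radius unpairK /= => u_close.
exact: le_lt_trans u_close b_lt.
Qed.

Theorem dense_universal_subspace : exists2 U : set X,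
  linear_subspace U /\ dense U &
  forall x, U x -> x != 0 -> forall (w : 'I_N -> X) (eps : K), 0 < eps ->
    exists k, forall i, `|A i k x - w i| < eps.
Proof.
exists (span_seq u).
  by split; [exact: span_seq_subspace | exact: span_seq_u_dense].
move=> x /span_seq_lead /[apply] -[q [a [aq_neq0 ->]]].
exact: span_lead_universal.
Qed.

End Construction.

Lemma theorem2p2_over_archimedean (K : numFieldType) :
  Num.archimedean_axiom K -> theorem2p2_over K.
Proof.
move=> K_archi X X_sep _ N T _ T_bounded nk X0 S nk_gt0 nk_lt X0_dense
  T_vanish S_approx.
split; first exact: strong_disjoint_blowup_collapse_criterion T_vanish S_approx.
have [B B_ge1 T_le] := common_operator_bound (fun i => (T_bounded i).2).
pose A i k := linear_pack (opow_linear (nk k) (T_bounded i).1).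
have M_homo : {homo (fun k => B ^+ nk k) : a b / (a <= b)%N >-> a <= b}.
  move=> a b ab; apply: (ler_weXn2l B_ge1).
  exact: (homo_leq leqnn leq_trans (fun k => ltnW (nk_lt k))) ab.
have A_le i k x : `|A i k x| <= B ^+ nk k * `|x|.
  exact: opow_bounded (le_trans ler01 B_ge1) (T_le i) _ _.
have [e e_X0 e_dense] := separable_dense_seq K_archi X_sep X0_dense.
have [U [U_sub U_dense] U_univ] := dense_universal_subspace (A := A)
  (fun k => exprn_ege1 _ B_ge1) M_homo A_le T_vanish S_approx e_X0 e_dense K_archi.
exists U; split=> [//|]; split=> // x Ux x_neq0.
apply: d_hypercyclic_of_approx K_archi _ => w eps eps_gt0.
by have [k k_close] := U_univ x Ux x_neq0 w eps eps_gt0; exists (nk k).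
Qed.

Theorem theorem2p2 (R : realType) :
  theorem2p2_over R /\ theorem2p2_over (R[i])%C.
Proof.
split; apply: theorem2p2_over_archimedean;
  [exact: realType_archimedean | exact: complex_archimedean].
Qed.
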